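(* Let $q$ be a prime power, $m\ge1$, $1\le k\le n$, $g_1,\dots,g_n\in\mathbb{F}_{q^m}$ linearly independent over $\mathbb{F}_q$, $\mathbf g=(g_1,\dots,g_n)$, $\mathbf r\in\mathbb{F}_{q^m}^n$. Let $B=\{b^{(1)},b^{(2)}\}$ be a minimal basis of the interpolation module $\mathfrak M(\mathbf r)$ with respect to the $(0,k-1)$-weighted term-over-position order, with $\mathrm{lpos}(b^{(i)})=i$ for $i=1,2$, and let $\ell_i$ be the $(0,k-1)$-weighted $q$-degree of $b^{(i)}$. Then $\ell_1+\ell_2=n+k-1$, or equivalently $\mathrm{qdeg}(b^{(1)}_1)+\mathrm{qdeg}(b^{(2)}_2)=n$, where $b^{(i)}=[b^{(i)}_1\ \ b^{(i)}_2]$.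
   Context: Write $[i]:=q^i$. A $q$-linearized polynomial is $f(x)=\sum_{i=0}^{d}a_ix^{[i]}$, $a_i\in\mathbb{F}_{q^m}$; if $a_d\ne0$, $d=\mathrm{qdeg}(f)$ ($\mathrm{qdeg}(0)=-\infty$). $\mathcal{L}_q(x,q^m)$ is the ring of these under addition and composition $\circ$. $\Pi_{\mathbf g}(x)=\prod_{u\in\langle g_1,\dots,g_n\rangle}(x-u)$ ($\mathbb{F}_q$-span), in $\mathcal{L}_q(x,q^m)$ of $q$-degree $n$. For $\mathbf r=(r_1,\dots,r_n)$, $\Lambda_{\mathbf g,\mathbf r}(x)=\sum_{i=1}^n(-1)^{n-i}r_i\det(\mathfrak D_i(\mathbf g,x))/\det(M_n(g_1,\dots,g_n))$ ($M_n(v_1,\dots,v_s)$ the $n\times s$ matrix with $(j,l)$ entry $v_l^{[j-1]}$, $\mathfrak D_i(\mathbf g,x)$ is $M_n(g_1,\dots,g_n,x)$ without column $i$), in $\mathcal{L}_q(x,q^m)$ with $\Lambda_{\mathbf g,\mathbf r}(g_i)=r_i$. $\mathfrak M(\mathbf r)$ is the set of all $\beta\circ[\Pi_{\mathbf g}\ \ 0]+\gamma\circ[-\Lambda_{\mathbf g,\mathbf r}\ \ x]$, $\beta,\gamma\in\mathcal{L}_q(x,q^m)$, where $h\circ[f_1\ f_2]=[h\circ f_1\ \ h\circ f_2]$. Monomials are $x^{[i]}e_j$, $j\in\{1,2\}$. $(0,k-1)$-weighted term-over-position order: with $w_1=0,w_2=k-1$, $x^{[i_1]}e_{j_1}<x^{[i_2]}e_{j_2}$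 iff $i_1+w_{j_1}<i_2+w_{j_2}$ or (equality and $j_1<j_2$). $\mathrm{lm},\mathrm{lt},\mathrm{lpos}$ of nonzero $f$: greatest monomial, that term with coefficient, its coordinate. The $(0,k-1)$-weighted $q$-degree of $[f_1\ f_2]$ is $\max\{\mathrm{qdeg}(f_1),\mathrm{qdeg}(f_2)+k-1\}$. A basis is a generating set with $\sum a_i\circ f^{(i)}=0\Rightarrow$ all $a_i=0$. $f$ reduces modulo a set $F$ of nonzero elements in one step if $h=f-\sum_i(b_ix^{[a_i]})\circ f^{(i)}$ for some $f^{(i)}\in F$, $b_i\in\mathbb{F}_{q^m}$, $a_i\ge0$ with $\mathrm{lm}(f)=x^{[a_i]}\circ\mathrm{lm}(f^{(i)})$ and $\mathrm{lt}(f)=\sum_i(b_ix^{[a_i]})\circ\mathrm{lt}(f^{(i)})$; $f$ is minimal w.r.t. $F$ if it cannot be so reduced; a basis $B$ is minimal if each $b\in B$ is minimal w.r.t. $B\setminus\{b\}$. *)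

From HB Require Import structures.
From mathcomp Require Import all_boot all_order all_algebra all_field.
Set Implicit Arguments.
Unset Strict Implicit.
Unset Printing Implicit Defensive.
Import GRing.Theory.
Local Open Scope ring_scope.

(* q-linearized polynomials over L = F_{q^m}, represented as ordinary
   polynomials whose support is contained in {q^i}; composition is \Po
   (h \Po f = h(f(x)) = h o f). *)
Definition linearized (L : fieldType) (q : nat) (f : {poly L}) : Prop :=
  forall i : nat, f`_i != 0 -> exists j : nat, i = (q ^ j)%N.

(* q-degree: d with x^[d] the top term (only meaningful for nonzero
   linearized f; qdeg 0 is set to 0 and never used as -oo, see wqdeg). *)
Definition qdeg (L : fieldType) (q : nat) (f : {poly L}) : nat :=
  trunc_log q (size f).-1.

Definition lpair (L : fieldType) := ({poly L} * {poly L})%type.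

Definition pzero (L : fieldType) : lpair L := (0, 0).
Definition padd (L : fieldType) (f g : lpair L) : lpair L :=
  (f.1 + g.1, f.2 + g.2).
Definition pcomp (L : fieldType) (h : {poly L}) (f : lpair L) : lpair L :=
  (h \Po f.1, h \Po f.2).

(* monomials x^[i] e_j encoded as (i, j), j in {1,2} *)
Definition mono := (nat * nat)%type.
Definition wdeg (k : nat) (a : mono) : nat :=
  (a.1 + (if a.2 == 2%N then k - 1 else 0))%N.
Definition mono_lt (k : nat) (a b : mono) : bool :=
  (wdeg k a < wdeg k b)%N || ((wdeg k a == wdeg k b) && (a.2 < b.2)%N).
Definition mono_max (k : nat) (a b : mono) : mono :=
  if mono_lt k a b then b else a.
(* x^[a] o x^[i] e_j = x^[a+i] e_j *)
Definition mono_comp (a : nat) (b : mono) : mono := ((a + b.1)%N, b.2).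

Definition coord (L : fieldType) (f : lpair L) (j : nat) : {poly L} :=
  if j == 1%N then f.1 else f.2.

Definition support (L : fieldType) (q : nat) (f : lpair L) : seq mono :=
  [seq (i, 1%N) | i <- [seq i <- iota 0 (size f.1) | f.1`_(q ^ i) != 0]] ++
  [seq (i, 2%N) | i <- [seq i <- iota 0 (size f.2) | f.2`_(q ^ i) != 0]].

(* leading monomial: the greatest monomial of the support ((0,1) is the
   least monomial, so it is a neutral start value) *)
Definition lm (L : fieldType) (q k : nat) (f : lpair L) : mono :=
  foldr (mono_max k) (0%N, 1%N) (support q f).
Definition lc (L : fieldType) (q k : nat) (f : lpair L) : L :=
  (coord f (lm q k f).2)`_(q ^ (lm q k f).1).
Definition mono_term (L : fieldType) (q : nat) (c : L) (a : mono) : lpair L :=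
  if a.2 == 1%N then (c *: 'X^(q ^ a.1), 0) else (0, c *: 'X^(q ^ a.1)).
Definition lt (L : fieldType) (q k : nat) (f : lpair L) : lpair L :=
  mono_term q (lc q k f) (lm q k f).
Definition lpos (L : fieldType) (q k : nat) (f : lpair L) : nat :=
  (lm q k f).2.

(* (0,k-1)-weighted q-degree max{qdeg f1, qdeg f2 + k - 1}, a zero
   component (qdeg = -oo) being ignored; f assumed nonzero *)
Definition wqdeg (L : fieldType) (q k : nat) (f : lpair L) : nat :=
  maxn (qdeg q f.1) (if f.2 == 0 then 0%N else (qdeg q f.2 + (k - 1))%N).

(* one-step reduction of f modulo the finite set F:
   h = f - sum_i (b_i x^[a_i]) o f^(i), with lm(f) = x^[a_i] o lm(f^(i))
   and lt(f) = sum_i (b_i x^[a_i]) o lt(f^(i)) *)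
Definition reduces (L : fieldType) (q k : nat) (f : lpair L)
    (F : seq (lpair L)) : Prop :=
  exists s : seq (L * nat * lpair L),
    [/\ forall t, t \in s -> t.2 \in F,
        forall t, t \in s -> lm q k f = mono_comp t.1.2 (lm q k t.2)
      & lt q k f = foldr (@padd L) (pzero L)
                    [seq pcomp (t.1.1 *: 'X^(q ^ t.1.2)) (lt q k t.2) | t <- s]].

Definition minimal_wrt (L : fieldType) (q k : nat) (f : lpair L)
    (F : seq (lpair L)) : Prop := ~ reduces q k f F.

(* linear independence over F_q = {c | c^q = c} *)
Definition Fq_lin_indep (L : fieldType) (q n : nat) (g : n.-tuple L) : Prop :=
  forall c : 'I_n -> L, (forall i, c i ^+ q = c i) ->
    \sum_(i < n) c i * g`_i = 0 -> forall i, c i = 0.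

Definition Fq_span (L : finFieldType) (q n : nat) (g : n.-tuple L) : {set L} :=
  [set x : L | [exists c : {ffun 'I_n -> L},
      [forall i, c i ^+ q == c i] && (x == \sum_(i < n) c i * g`_i)]].

Definition Pi_g (L : finFieldType) (q n : nat) (g : n.-tuple L) : {poly L} :=
  \prod_(u in Fq_span q g) ('X - u%:P).

Definition Mmat (L : fieldType) (q n : nat) (g : n.-tuple L) : 'M[L]_n :=
  \matrix_(j < n, l < n) g`_l ^+ (q ^ j).

(* D_i(g,x) = M_n(g_1,..,g_n,x) without column i (0-based i) *)
Definition Dmat (L : fieldType) (q n : nat) (g : n.-tuple L) (i : nat)
    : 'M[{poly L}]_n :=
  \matrix_(j < n, l < n)
    if (l.+1 < n)%N then (g`_(if (l < i)%N then (l : nat) else l.+1) ^+ (q ^ j))%:P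
    else 'X^(q ^ j).

Definition Lambda (L : fieldType) (q n : nat) (g r : n.-tuple L) : {poly L} :=
  \sum_(i < n) (((-1) ^+ (n - i.+1) * r`_i / \det (Mmat q g)) *: \det (Dmat q g i)).

Definition Mmod (L : finFieldType) (q n : nat) (g r : n.-tuple L)
    (f : lpair L) : Prop :=
  exists beta gamma : {poly L}, [/\ linearized q beta, linearized q gamma &
    f = padd (pcomp beta (Pi_g q g, 0)) (pcomp gamma (- Lambda q g r, 'X))].

Definition is_basis2 (L : fieldType) (q : nat) (M : lpair L -> Prop)
    (b1 b2 : lpair L) : Prop :=
  [/\ M b1, M b2,
      (forall f, M f <-> exists beta gamma : {poly L},
          [/\ linearized q beta, linearized q gamma &
              f = padd (pcomp beta b1) (pcomp gamma b2)])
    & forall beta gamma : {poly L}, linearized q beta -> linearized q gamma ->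
        padd (pcomp beta b1) (pcomp gamma b2) = pzero L ->
        beta = 0 /\ gamma = 0].

Definition is_minimal_basis2 (L : fieldType) (q k : nat)
    (M : lpair L -> Prop) (b1 b2 : lpair L) : Prop :=
  [/\ is_basis2 q M b1 b2, minimal_wrt q k b1 [:: b2]
    & minimal_wrt q k b2 [:: b1]].

(* Counting argument.  For large N, let S_N be the set of f in M(r) of
   (0,k-1)-weighted q-degree at most N.  Since lpos b_i = i, the weighted
   degree of beta o b1 + gamma o b2 is the larger of those of beta o b1 and
   gamma o b2 (predictable degree property), so S_N is in bijection with the
   pairs of linearized (beta, gamma) with qdeg beta <= N - l1 and
   qdeg gamma <= N - l2, and |S_N| = q^(m (2N - l1 - l2 + 2)).  Writing
   instead f = beta o [Pi 0] + gamma o [-Lambda x] and reducing gamma o Lambda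
   modulo Pi, S_N is also in bijection with the pairs of q-degrees at most
   N - n and N - k + 1.  Comparing the two counts gives l1 + l2 = n + k - 1. *)

From Pilot Require Import Defs.
From HB Require Import structures.
From mathcomp Require Import all_boot all_order all_algebra all_field.
From mathcomp Require Import zify.
Set Implicit Arguments.
Unset Strict Implicit.
Unset Printing Implicit Defensive.
Import GRing.Theory.
Local Open Scope ring_scope.

Definition deg (R : nzRingType) (f : {poly R}) : nat := (size f).-1.

Section Degree.

Variable L : fieldType.
Implicit Types f h : {poly L}.

Lemma deg0 : deg (0 : {poly L}) = 0%N.
Proof. by rewrite /deg size_poly0. Qed.

Lemma degN f : deg (- f) = deg f.
Proof. by rewrite /deg size_polyN. Qed.

Lemma deg_comp f h : deg (f \Po h) = (deg f * deg h)%N.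
Proof. exact: size_comp_poly. Qed.

Lemma coef_deg f : f != 0 -> f`_(deg f) != 0.
Proof. by move=> f0; rewrite /deg -lead_coefE lead_coef_eq0. Qed.

Lemma coef_gt_deg f i : (deg f < i)%N -> f`_i = 0.
Proof. by move=> lt_fi; apply: nth_default; move: lt_fi; rewrite /deg; case: (size f). Qed.

Lemma leq_coef_deg f i : f`_i != 0 -> (i <= deg f)%N.
Proof. by apply: contraR; rewrite -ltnNge => /coef_gt_deg ->. Qed.

Lemma degDl f h : (deg h < deg f)%N -> deg (f + h) = deg f.
Proof.
rewrite /deg => lt_hf; rewrite size_polyDl //; move: lt_hf.
by case: (size h) => [|sh]; case: (size f) => [|sf] //=; lia.
Qed.

Lemma deg_add_leq f h : (deg (f + h) <= maxn (deg f) (deg h))%N.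
Proof.
have := size_polyD f h; rewrite /deg.
by case: (size (f + h)) => [|s]; case: (size f) => [|sf]; case: (size h) => [|sh] /=; lia.
Qed.

End Degree.

Section Linearized.

Variables (L : fieldType) (q : nat).
Implicit Types f h P : {poly L}.

Lemma linearized0 : linearized q (0 : {poly L}).
Proof. by move=> i; rewrite coef0 eqxx. Qed.

Lemma linearizedD f h : linearized q f -> linearized q h -> linearized q (f + h).
Proof.
move=> lin_f lin_h i; rewrite coefD.
have [fi0|/lin_f //] := eqVneq f`_i 0.
by rewrite fi0 add0r => /lin_h.
Qed.

Lemma linearizedZ c f : linearized q f -> linearized q (c *: f).
Proof.
move=> lin_f i; rewrite coefZ => cfi0; apply: lin_f.
by apply: contraNneq cfi0 => ->; rewrite mulr0.
Qed.

Lemma linearizedN f : linearized q f -> linearized q (- f).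
Proof. by rewrite -scaleN1r; apply: linearizedZ. Qed.

Lemma linearizedB f h : linearized q f -> linearized q h -> linearized q (f - h).
Proof. by move=> lin_f lin_h; apply: linearizedD (linearizedN lin_h). Qed.

Lemma linearized_sum (I : Type) (r : seq I) (P : pred I) (F : I -> {poly L}) :
  (forall i, P i -> linearized q (F i)) -> linearized q (\sum_(i <- r | P i) F i).
Proof. by move=> lin_F; apply: big_ind => //; [apply: linearized0 | apply: linearizedD]. Qed.

Lemma linearizedXq j : linearized q ('X^(q ^ j) : {poly L}).
Proof.
by move=> i; rewrite coefXn; have [->|] := eqVneq i (q ^ j)%N; [exists j | rewrite eqxx].
Qed.

Lemma linearizedX : linearized q ('X : {poly L}).
Proof. by rewrite -['X]expr1 -(expn0 q); apply: linearizedXq. Qed.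

Hypothesis q_gt1 : (1 < q)%N.

Lemma linearized_coef0 f : linearized q f -> f`_0 = 0.
Proof.
move=> lin_f; apply/eqP/negPn/negP => /lin_f [j E0].
by have := expn_gt0 q j; rewrite -E0 ltnn (ltnW q_gt1).
Qed.

Lemma linearized_expand f e : linearized q f ->
  (forall j, (e <= j)%N -> f`_(q ^ j) = 0) ->
  f = \sum_(j < e) f`_(q ^ j) *: 'X^(q ^ j).
Proof.
move=> lin_f fe0; apply/polyP => i; rewrite coef_sum.
under eq_bigr do rewrite coefZ coefXn.
have [fi0|/lin_f [j ->]] := eqVneq f`_i 0.
  rewrite fi0 big1 // => j _.
  by have [<-|] := eqVneq i (q ^ j)%N; rewrite ?fi0 ?mul0r ?mulr0.
have qjI j' : ((q ^ j)%N == (q ^ j')%N) = (j == j') by rewrite eqn_exp2l.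
have [lt_je|le_ej] := ltnP j e; last first.
  rewrite fe0 // big1 // => j' _.
  by rewrite qjI gtn_eqF ?mulr0 // (leq_trans (ltn_ord j')).
rewrite (bigD1 (Ordinal lt_je)) //= eqxx mulr1 big1 ?addr0 // => j' ne_j'.
by rewrite qjI eq_sym -[_ == _]/(j' == Ordinal lt_je) (negbTE ne_j') mulr0.
Qed.

Lemma linearizedE f : linearized q f ->
  f = \sum_(j < size f) f`_(q ^ j) *: 'X^(q ^ j).
Proof.
move=> lin_f; apply: linearized_expand => // j le_fj.
exact/nth_default/(leq_trans le_fj)/ltnW/ltn_expl.
Qed.

Lemma deg_linearized f : linearized q f -> f != 0 -> deg f = (q ^ qdeg q f)%N.
Proof. by move=> lin_f /coef_deg /lin_f [j Ej]; rewrite /qdeg -/(deg f) Ej trunc_expnK. Qed.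

Lemma deg_linearized_eq0 f : linearized q f -> (deg f == 0%N) = (f == 0).
Proof.
move=> lin_f; have [->|f0] := eqVneq f 0; first by rewrite deg0.
by rewrite deg_linearized // expn_eq0; case: q q_gt1.
Qed.

Hypothesis q_char : [pchar L].-nat q.

Let q_char_poly : [pchar {poly L}].-nat q.
Proof. by rewrite (eq_pnat _ (@pchar_poly L)). Qed.

Let expq_sum (R : comNzRingType) (I : Type) (r : seq I) (F : I -> R) :
  [pchar R].-nat q -> (\sum_(i <- r) F i) ^+ q = \sum_(i <- r) F i ^+ q.
Proof.
move=> qR; apply: (big_morph (fun x => x ^+ q)) => [x y|]; first exact: exprDn_pchar.
by rewrite expr0n gtn_eqF // ltnW.
Qed.

Lemma linearized_expq f : linearized q f -> linearized q (f ^+ q).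
Proof.
move=> lin_f; rewrite (linearizedE lin_f) expq_sum //; apply: linearized_sum => j _.
by rewrite exprZn -exprM -expnSr; apply/linearizedZ/linearizedXq.
Qed.

Lemma linearized_comp f P :
  linearized q f -> linearized q P -> linearized q (f \Po P).
Proof.
move=> lin_f lin_P; rewrite (linearizedE lin_f) linear_sum.
apply: linearized_sum => j _ /=; rewrite comp_polyZ comp_Xn_poly; apply: linearizedZ.
elim: {j}(j : nat) => [|j IHj]; first by rewrite expn0 expr1.
by rewrite expnSr exprM; apply: linearized_expq.
Qed.

Lemma comp_linearizedN f P : linearized q f -> f \Po (- P) = - (f \Po P).
Proof.
move=> lin_f; rewrite (linearizedE lin_f) !linear_sum.
apply: eq_bigr => j _ /=; rewrite !comp_polyZ !comp_Xn_poly -scalerN exprNn_pchar //.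
by rewrite pnatX q_char_poly.
Qed.

Lemma horner_linearizedD f x y : linearized q f -> f.[x + y] = f.[x] + f.[y].
Proof.
move=> lin_f; rewrite (linearizedE lin_f) !horner_sum -big_split /=.
apply: eq_bigr => j _; rewrite !hornerZ !hornerXn -mulrDr exprDn_pchar //.
by rewrite pnatX q_char.
Qed.

Lemma horner_linearized_sum f (I : Type) (r : seq I) (F : I -> L) :
  linearized q f -> f.[\sum_(i <- r) F i] = \sum_(i <- r) f.[F i].
Proof.
move=> lin_f; apply: big_morph => [x y|]; first exact: horner_linearizedD.
by rewrite horner_coef0 linearized_coef0.
Qed.

Lemma horner_linearizedZ f c x :
  linearized q f -> c ^+ q = c -> f.[c * x] = c * f.[x].
Proof.
move=> lin_f cq; rewrite (linearizedE lin_f) !horner_sum mulr_sumr.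
apply: eq_bigr => j _; rewrite !hornerZ !hornerXn exprMn mulrCA; congr (_ * (_ * _)).
elim: {j}(j : nat) => [|j IHj]; first by rewrite expn0 expr1.
by rewrite expnSr exprM IHj.
Qed.

End Linearized.

(* [subspace_poly q (g :: s)] is [\prod_(c in F_q) S (x - c g)] for [S := subspace_poly q s]:
   the monic polynomial whose roots are the F_q-span of [g :: s], when it is free. *)
Fixpoint subspace_poly (L : fieldType) (q : nat) (s : seq L) : {poly L} :=
  if s is g :: s' then
    let S := subspace_poly q s' in S ^+ q - (S.[g] ^+ q.-1) *: S
  else 'X.

Section SubspacePolynomial.

Variables (L : fieldType) (q : nat).
Hypotheses (q_gt1 : (1 < q)%N) (q_char : [pchar L].-nat q).
Implicit Type s : seq L.

Lemma linearized_subspace_poly s : linearized q (subspace_poly q s).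
Proof.
elim: s => [|g s IHs] /=; first exact: linearizedX.
exact/linearizedB/linearizedZ/IHs/linearized_expq.
Qed.

Lemma subspace_poly_monic_size s :
  subspace_poly q s \is monic /\ size (subspace_poly q s) = (q ^ size s).+1.
Proof.
elim: s => [|g s [mon_S size_S]] /=; first by rewrite monicX size_polyX.
set S := subspace_poly q s.
have size_Sq : size (S ^+ q) = (q ^ (size s).+1).+1.
  have S_q0 : S ^+ q != 0 by rewrite monic_neq0 ?monic_exp.
  by rewrite -(prednK (_ : 0 < size (S ^+ q))%N) ?size_poly_gt0 // size_exp size_S expnSr mulnC.
have lt_size : (size (- (S.[g] ^+ q.-1 *: S)) < size (S ^+ q))%N.
  rewrite size_polyN size_Sq (leq_ltn_trans (size_scale_leq _ _)) // size_S ltnS.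
  by rewrite ltn_exp2l // ltnSn.
split; last by rewrite size_polyDl.
by rewrite monicE lead_coefDl // -monicE monic_exp.
Qed.

Lemma root_subspace_poly s x : x \in s -> root (subspace_poly q s) x.
Proof.
elim: s => //= g s IHs; rewrite in_cons /root !hornerE => /predU1P [->|/IHs /eqP ->].
  by rewrite -exprSr prednK ?subrr // ltnW.
by rewrite expr0n gtn_eqF ?mulr0 ?subrr // ltnW.
Qed.

Lemma root_subspace_poly_span n (g : n.-tuple L) (c : 'I_n -> L) :
  (forall i, c i ^+ q = c i) ->
  root (subspace_poly q g) (\sum_(i < n) c i * g`_i).
Proof.
move=> c_Fq; have lin_S := @linearized_subspace_poly g.
rewrite /root (horner_linearized_sum q_gt1 q_char _ _ lin_S); apply/eqP/big1 => i _.
rewrite (horner_linearizedZ q_gt1 _ lin_S) // (eqP (root_subspace_poly _)) ?mulr0 //.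
by rewrite mem_nth // size_tuple.
Qed.

End SubspacePolynomial.

Section FiniteField.

Variables (L : finFieldType) (q m : nat).
Hypotheses (q_gt1 : (1 < q)%N) (q_char : [pchar L].-nat q) (L_card : #|L| = (q ^ m)%N).

Let q_char_poly : [pchar {poly L}].-nat q.
Proof. by rewrite (eq_pnat _ (@pchar_poly L)). Qed.

Lemma card_Fq : #|[set x : L | x ^+ q == x]| = q.
Proof.
pose P : {poly L} := 'X^q - 'X.
have size_P : size P = q.+1.
  by rewrite size_polyDl size_polyXn // size_polyN size_polyX ltnS.
have dvd_P j : P %| 'X^(q ^ j) - 'X.
  elim: j => [|j IHj]; first by rewrite expn0 subrr dvdp0.
  have -> : 'X^(q ^ j.+1) - 'X = ('X^(q ^ j) - 'X) ^+ q + P.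
    by rewrite exprDn_pchar // exprNn_pchar // -exprM -expnSr addrA subrK.
  by rewrite dvdp_add // dvdp_exp // ltnW.
have /dvdp_prod_XsubC [msk P_eqp] : P %| \prod_(x <- index_enum L) ('X - x%:P).
  by rewrite -finField_genPoly L_card dvd_P.
set s := mask msk _ in P_eqp.
have /card_uniqP card_s : uniq s by apply/mask_uniq/index_enum_uniq.
have size_s : size s = q.
  by have := eqp_size P_eqp; rewrite size_P size_prod_XsubC => -[].
rewrite -[in RHS]size_s -card_s; apply: eq_card => x; rewrite inE.
by rewrite -root_prod_XsubC -(eqp_root P_eqp) /root !hornerE subr_eq0.
Qed.

Lemma card_Fq_span n (g : n.-tuple L) :
  Fq_lin_indep q g -> #|Fq_span q g| = (q ^ n)%N.
Proof.
move=> g_indep; pose D := ffun_on_mem 'I_n (mem [set x : L | x ^+ q == x]).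
have -> : Fq_span q g = [set \sum_(i < n) c i * g`_i | c : {ffun 'I_n -> L} in D].
  apply/setP => x; rewrite inE; apply/existsP/imsetP => [[c /andP[/forallP c_Fq /eqP ->]]|].
    by exists c => //; apply/ffun_onP => i; rewrite inE.
  move=> [c /ffun_onP c_Fq ->]; exists c; rewrite eqxx andbT.
  by apply/forallP => i; have := c_Fq i; rewrite inE.
rewrite card_in_imset ?card_ffun_on ?card_Fq ?card_ord //.
move=> c c' /ffun_onP c_Fq /ffun_onP c'_Fq eq_cc'; apply/ffunP => i.
apply/eqP; rewrite -subr_eq0; apply/eqP; move: i; apply: (g_indep (fun i => c i - c' i)).
  move=> i; have := c_Fq i; have := c'_Fq i; rewrite !inE => /eqP c'q /eqP cq.
  by rewrite exprDn_pchar // exprNn_pchar // cq c'q.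
by rewrite -[RHS](subrr (\sum_(i < n) c' i * g`_i)) -{1}eq_cc' -sumrB;
  apply: eq_bigr => i _; rewrite mulrBl.
Qed.

Lemma Pi_g_subspace_poly n (g : n.-tuple L) :
  Fq_lin_indep q g -> Pi_g q g = subspace_poly q g.
Proof.
move=> g_indep; have [mon_S size_S] := @subspace_poly_monic_size L q q_gt1 g.
have := @all_roots_prod_XsubC _ (subspace_poly q g) (enum (Fq_span q g)).
rewrite -cardE card_Fq_span // size_S size_tuple uniq_rootsE enum_uniq => ->//.
  by rewrite (monicP mon_S) scale1r big_enum.
apply/allP => x; rewrite mem_enum inE => /existsP [c /andP[/forallP c_Fq /eqP ->]].
by apply: root_subspace_poly_span => // i; apply/eqP.
Qed.

End FiniteField.

Lemma linearized_det_lastcol (L : fieldType) q n (A : 'M[{poly L}]_n.+1) :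
  (forall i j, j != ord_max -> exists c, A i j = c%:P) ->
  (forall i, linearized q (A i ord_max)) -> linearized q (\det A).
Proof.
move=> A_const A_lin; rewrite (expand_det_col A ord_max).
apply: linearized_sum => i _; rewrite /cofactor mulrC -mulrA.
set B := \matrix_(a, b) (row' i (col' ord_max A) a b)`_0.
have -> : row' i (col' ord_max A) = map_mx polyC B.
  apply/matrixP => a b; rewrite !mxE.
  have [|c ->] := A_const (lift i a) (lift ord_max b); first by rewrite eq_sym neq_lift.
  by rewrite coefC eqxx.
by rewrite det_map_mx mulrA -(rmorph_sign (@polyC L)) -polyCM mul_polyC; apply/linearizedZ/A_lin.
Qed.

Lemma linearized_Lambda (L : fieldType) q n (g r : n.-tuple L) :
  linearized q (Lambda q g r).
Proof.
apply: linearized_sum => i _; apply: linearizedZ.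
case: n g r i => [|n] g r i; first by case: i.
apply: linearized_det_lastcol => [a b ne_b_max|a]; rewrite mxE; last first.
  by rewrite ltnn; apply: linearizedXq.
suff -> : (b.+1 < n.+1)%N by eexists.
by rewrite ltnS ltn_neqAle -ltnS ltn_ord andbT.
Qed.

Section LeadingPosition.

Variables (L : fieldType) (q k : nat).
Hypothesis q_gt1 : (1 < q)%N.

Definition mono_rank (a : mono) : nat := (3 * wdeg k a + a.2)%N.

Lemma mono_lt_rank (a b : mono) : (a.2 < 3)%N -> (b.2 < 3)%N ->
  mono_lt k a b = (mono_rank a < mono_rank b)%N.
Proof.
rewrite /mono_lt /mono_rank; case: a b => [a1 a2] [b1 b2] /=.
move: (wdeg k _) (wdeg k _) => x y a2_lt3 b2_lt3.
by apply/idP/idP => [/orP[|/andP[/eqP->]]|]; [lia | lia | case: ltngtP => //=; lia].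
Qed.

Lemma foldr_mono_max (s : seq mono) : all (fun a : mono => a.2 < 3)%N s ->
  let a := foldr (mono_max k) (0%N, 1%N) s in
  [/\ a = (0%N, 1%N) \/ a \in s, (a.2 < 3)%N
    & forall b, b \in s -> (mono_rank b <= mono_rank a)%N].
Proof.
elim: s => [|b s IHs] /=; first by split => //; left.
case/andP=> b2_lt3 /IHs [a_in a2_lt3 a_max]; set a := foldr _ _ s in a_in a2_lt3 a_max *.
rewrite /mono_max mono_lt_rank //; case: ltnP => [lt_ba|le_ab]; split => //.
- by case: a_in => [->|a_in]; [left | right; rewrite in_cons a_in orbT].
- by move=> c; rewrite in_cons => /predU1P [->|/a_max //]; apply: ltnW.
- by right; rewrite in_cons eqxx.
- by move=> c; rewrite in_cons => /predU1P [->|/a_max/leq_trans]; last apply.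
Qed.

Implicit Type f : lpair L.

Lemma mem_support f i j : ((i, j) \in Defs.support q f) =
  ((j == 1%N) && (i < size f.1)%N && (f.1`_(q ^ i) != 0)) ||
  ((j == 2%N) && (i < size f.2)%N && (f.2`_(q ^ i) != 0)).
Proof.
rewrite /Defs.support mem_cat.
by congr orb; apply/mapP/idP => [[i' + [-> ->]]|/andP[/andP[/eqP-> lt_i] nz_i]];
  rewrite ?mem_filter ?mem_iota /= 1?andbC //;
  by exists i; rewrite // mem_filter mem_iota /= lt_i nz_i.
Qed.

Lemma support_pos_lt3 f : all (fun a : mono => a.2 < 3)%N (Defs.support q f).
Proof. by apply/allP => [[i j]] /=; rewrite mem_support => /orP[] /andP[/andP[/eqP->]]. Qed.

Lemma qdeg_in_support f j : (j == 1%N) || (j == 2%N) ->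
  linearized q (Defs.coord f j) -> Defs.coord f j != 0 ->
  (qdeg q (Defs.coord f j), j) \in Defs.support q f.
Proof.
move=> j12 lin_fj fj0; have deg_fj := deg_linearized q_gt1 lin_fj fj0.
have nz_top : (Defs.coord f j)`_(q ^ qdeg q (Defs.coord f j)) != 0 by rewrite -deg_fj coef_deg.
have lt_top : (qdeg q (Defs.coord f j) < size (Defs.coord f j))%N.
  rewrite -(prednK (_ : 0 < size (Defs.coord f j))%N) ?size_poly_gt0 // ltnS -/(deg _).
  by rewrite deg_fj ltnW // ltn_expl.
by rewrite mem_support; case/orP: j12 nz_top lt_top => /eqP-> /= -> ->; rewrite ?orbT.
Qed.

Lemma support_leq_qdeg f i j : (i, j) \in Defs.support q f ->
  linearized q (Defs.coord f j) -> Defs.coord f j != 0 /\ (i <= qdeg q (Defs.coord f j))%N.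
Proof.
move=> ij_in lin_fj.
have nz_i : (Defs.coord f j)`_(q ^ i) != 0.
  by move: ij_in; rewrite mem_support /Defs.coord => /orP[] /andP[/andP[/eqP->]].
have fj0 : Defs.coord f j != 0 by apply: contraNneq nz_i => ->; rewrite coef0.
by split=> //; have := leq_coef_deg nz_i; rewrite (deg_linearized q_gt1 lin_fj fj0) leq_exp2l.
Qed.

Lemma lpos1_qdeg f : linearized q f.1 -> linearized q f.2 -> f <> pzero L ->
  lpos q k f = 1%N ->
  f.1 != 0 /\ (f.2 = 0 \/ (qdeg q f.2 + (k - 1) < qdeg q f.1)%N).
Proof.
move=> lin1 lin2 f_nz; rewrite /lpos /lm.
have [a_in _ a_max] := foldr_mono_max (support_pos_lt3 f).
move: (foldr _ _ _) a_in a_max => a a_in a_max a2.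
have [f2_0|f2_nz] := eqVneq f.2 0.
  split; last by left.
  by apply/eqP => f1_0; apply: f_nz; rewrite (surjective_pairing f) f1_0 f2_0.
have := a_max _ (qdeg_in_support (j := 2%N) isT lin2 f2_nz).
rewrite /mono_rank /wdeg /= a2; case: a_in a2 {a_max} => [-> _ /=|]; first lia.
case: a => i j /= ij_in j1; subst j.
have [f1_nz le_i] := support_leq_qdeg ij_in lin1.
by rewrite /Defs.coord /= in f1_nz le_i *; split=> //; right; lia.
Qed.

Lemma lpos2_qdeg f : linearized q f.1 -> linearized q f.2 ->
  lpos q k f = 2%N ->
  f.2 != 0 /\ (f.1 = 0 \/ (qdeg q f.1 <= qdeg q f.2 + (k - 1))%N).
Proof.
move=> lin1 lin2; rewrite /lpos /lm.
have [a_in _ a_max] := foldr_mono_max (support_pos_lt3 f).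
move: (foldr _ _ _) a_in a_max => a [-> //|]; case: a => i j /= ij_in a_max j2; subst j.
have [f2_nz le_i] := support_leq_qdeg ij_in lin2.
rewrite /Defs.coord /= in f2_nz le_i; split=> //; have [|f1_nz] := eqVneq f.1 0; [by left | right].
have := a_max _ (qdeg_in_support (j := 1%N) isT lin1 f1_nz).
by rewrite /mono_rank /wdeg /Defs.coord /=; lia.
Qed.

Lemma lpos1_deg f : linearized q f.1 -> linearized q f.2 -> f <> pzero L ->
  lpos q k f = 1%N ->
  [/\ deg f.1 = (q ^ qdeg q f.1)%N, (deg f.2 * q ^ (k - 1) < deg f.1)%N
     & wqdeg q k f = qdeg q f.1].
Proof.
move=> lin1 lin2 f_nz /(lpos1_qdeg lin1 lin2 f_nz) [f1_nz f2_small].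
rewrite /wqdeg (deg_linearized q_gt1 lin1 f1_nz); split=> //.
  have [->|f2_nz] := eqVneq f.2 0; first by rewrite deg0 expn_gt0 ltnW.
  case: f2_small => [f2_0|lt_f2]; first by rewrite f2_0 eqxx in f2_nz.
  by rewrite (deg_linearized q_gt1 lin2 f2_nz) -expnD ltn_exp2l.
by case: eqP f2_small => [_ _|f2_nz [//|/ltnW/maxn_idPl]]; rewrite ?maxn0.
Qed.

Lemma lpos2_deg f : linearized q f.1 -> linearized q f.2 -> lpos q k f = 2%N ->
  [/\ deg f.2 = (q ^ qdeg q f.2)%N, (deg f.1 <= deg f.2 * q ^ (k - 1))%N
     & wqdeg q k f = (qdeg q f.2 + (k - 1))%N].
Proof.
move=> lin1 lin2 /(lpos2_qdeg lin1 lin2) [f2_nz f1_small].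
rewrite /wqdeg (negbTE f2_nz) (deg_linearized q_gt1 lin2 f2_nz); split=> //.
  have [->|f1_nz] := eqVneq f.1 0; first by rewrite deg0.
  case: f1_small => [f1_0|le_f1]; first by rewrite f1_0 eqxx in f1_nz.
  by rewrite (deg_linearized q_gt1 lin1 f1_nz) -expnD leq_exp2l.
apply/maxn_idPr; have [->|f1_nz] := eqVneq f.1 0; first by rewrite /qdeg size_poly0 trunc_log0.
by case: f1_small => // f1_0; rewrite f1_0 eqxx in f1_nz.
Qed.

End LeadingPosition.

Lemma size_sub_lead (R : nzRingType) (a b : {poly R}) :
  a != 0 -> size a = size b -> lead_coef a = lead_coef b -> (size (a - b)%R < size a)%N.
Proof.
move=> a_nz size_ab lead_ab.
have le_ab : (size (a - b)%R <= size a)%N.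
  by rewrite (leq_trans (size_polyD _ _)) // size_polyN -size_ab maxnn.
rewrite ltn_neqAle le_ab andbT; apply: contra a_nz => /eqP size_ab'.
have /eqP : lead_coef (a - b) = 0.
  by rewrite lead_coefE size_ab' coefB -lead_coefE size_ab lead_ab -lead_coefE subrr.
rewrite lead_coef_eq0 subr_eq0 => /eqP ab.
by rewrite -size_poly_eq0 -size_ab' ab subrr size_poly0.
Qed.

Section LinearizedDivision.

Variables (L : fieldType) (q : nat).
Hypotheses (q_gt1 : (1 < q)%N) (q_char : [pchar L].-nat q).

Lemma linearized_divp (Pi P : {poly L}) n :
  linearized q Pi -> Pi \is monic -> deg Pi = (q ^ n)%N -> linearized q P ->
  exists2 beta, linearized q beta & (deg (P - (beta \Po Pi)) < q ^ n)%N.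
Proof.
move=> lin_Pi mon_Pi deg_Pi; elim: {P}(size P).+1 {-2}P (ltnSn (size P)) => // s IHs P.
move=> size_P lin_P; have [lt_P|le_P] := ltnP (deg P) (q ^ n).
  by exists 0; [apply: linearized0 | rewrite comp_poly0 subr0].
have P_nz : P != 0 by apply: contraTneq le_P => ->; rewrite deg0 -ltnNge expn_gt0 ltnW.
have deg_P := deg_linearized q_gt1 lin_P P_nz; rewrite deg_P leq_exp2l // in le_P.
pose c := lead_coef P *: 'X^(q ^ (qdeg q P - n)) : {poly L}.
have lin_c : linearized q c by apply/linearizedZ/linearizedXq.
have size_Pi_exp : size (Pi ^+ (q ^ (qdeg q P - n))) = size P.
  have Pi_exp_nz : Pi ^+ (q ^ (qdeg q P - n)) != 0 by rewrite monic_neq0 ?monic_exp.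
  rewrite -(prednK (_ : 0 < size (Pi ^+ _))%N) ?size_poly_gt0 // size_exp -/(deg Pi) deg_Pi.
  by rewrite -expnD subnKC // -deg_P prednK // size_poly_gt0.
have lt_size : (size (P - (c \Po Pi))%R < size P)%N.
  rewrite comp_polyZ comp_Xn_poly size_sub_lead ?size_scale ?lead_coef_eq0 //.
  by rewrite lead_coefZ (monicP (monic_exp _ mon_Pi)) mulr1.
have lin_P' := linearizedB lin_P (linearized_comp q_gt1 q_char lin_c lin_Pi).
have [beta lin_beta lt_beta] := IHs _ (leq_trans lt_size size_P) lin_P'.
by exists (c + beta); [apply: linearizedD | rewrite comp_polyD opprD addrA].
Qed.

End LinearizedDivision.

Section Counting.

Variables (L : finFieldType) (q : nat).
Hypothesis q_gt1 : (1 < q)%N.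

Definition linpoly e (u : {ffun 'I_e -> L}) : {poly L} :=
  \sum_(i < e) u i *: 'X^(q ^ i).

Lemma linearized_linpoly e (u : {ffun 'I_e -> L}) : linearized q (linpoly u).
Proof. by apply: linearized_sum => i _; apply/linearizedZ/linearizedXq. Qed.

Lemma coef_linpoly e (u : {ffun 'I_e -> L}) (i : 'I_e) : (linpoly u)`_(q ^ i) = u i.
Proof.
rewrite coef_sum (bigD1 i) //= coefZ coefXn eqxx mulr1 big1 ?addr0 // => j ne_ji.
by rewrite coefZ coefXn eqn_exp2l // val_eqE eq_sym (negbTE ne_ji) mulr0.
Qed.

Lemma linpoly_inj e : injective (@linpoly e).
Proof. by move=> u v eq_uv; apply/ffunP => i; rewrite -!coef_linpoly eq_uv. Qed.

Lemma deg_linpoly e (u : {ffun 'I_e.+1 -> L}) : (deg (linpoly u) <= q ^ e)%N.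
Proof.
rewrite /deg -subn1 leq_subLR add1n; apply/leq_sizeP => j lt_ej.
rewrite coef_sum big1 // => i _; rewrite coefZ coefXn gtn_eqF ?mulr0 //.
by apply: leq_trans lt_ej; rewrite ltnS leq_exp2l // -ltnS.
Qed.

Lemma linpolyE e (f : {poly L}) : linearized q f -> (deg f <= q ^ e)%N ->
  f = linpoly [ffun i : 'I_e.+1 => f`_(q ^ i)].
Proof.
move=> lin_f le_fe; rewrite {1}(linearized_expand (e := e.+1) q_gt1 lin_f).
  by apply: eq_bigr => i _; rewrite ffunE.
by move=> j lt_ej; apply: coef_gt_deg; apply: leq_ltn_trans le_fe _; rewrite ltn_exp2l.
Qed.

Definition bounded_linearized e (f : {poly L}) : Prop :=
  linearized q f /\ (deg f <= q ^ e)%N.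

Definition parametrizes (Phi : {poly L} -> {poly L} -> lpair L)
    (S : lpair L -> Prop) (e1 e2 : nat) : Prop :=
  (forall f, S f <-> exists beta gamma, [/\ bounded_linearized e1 beta,
      bounded_linearized e2 gamma & f = Phi beta gamma])
  /\ forall beta gamma beta' gamma',
      bounded_linearized e1 beta -> bounded_linearized e2 gamma ->
      bounded_linearized e1 beta' -> bounded_linearized e2 gamma' ->
      Phi beta gamma = Phi beta' gamma' -> beta = beta' /\ gamma = gamma'.

Lemma card_eq_of_image (T T' : finType) (U : eqType) (F : T -> U) (F' : T' -> U) :
  injective F -> injective F' -> (forall u, (exists x, u = F x) <-> (exists y, u = F' y)) ->
  #|T| = #|T'|.
Proof.
move=> F_inj F'_inj eq_im; rewrite !cardT -(size_map F) -(size_map F').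
apply/perm_size/uniq_perm; rewrite ?map_inj_uniq -?enumT ?enum_uniq // => u.
apply/mapP/mapP => [[x _ ->]|[y _ ->]].
  by have [|y ->] := (eq_im (F x)).1; [exists x | exists y; rewrite ?mem_enum].
by have [|x ->] := (eq_im (F' y)).2; [exists y | exists x; rewrite ?mem_enum].
Qed.

Lemma parametrizes_dim Phi Phi' S e1 e2 e1' e2' :
  parametrizes Phi S e1 e2 -> parametrizes Phi' S e1' e2' -> (e1 + e2 = e1' + e2')%N.
Proof.
have bnd d (u : {ffun 'I_d.+1 -> L}) : bounded_linearized d (linpoly u).
  by split; [apply: linearized_linpoly | apply: deg_linpoly].
pose F d1 d2 Psi (uv : {ffun 'I_d1.+1 -> L} * {ffun 'I_d2.+1 -> L}) :=
  Psi (linpoly uv.1) (linpoly uv.2) : lpair L.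
have F_inj d1 d2 Psi : parametrizes Psi S d1 d2 -> injective (F d1 d2 Psi).
  move=> [_ Psi_inj] [u v] [u' v'] /(Psi_inj _ _ _ _ (bnd _ u) (bnd _ v) (bnd _ u') (bnd _ v')).
  by case=> /linpoly_inj-> /linpoly_inj->.
have F_im d1 d2 Psi : parametrizes Psi S d1 d2 ->
    forall f, S f <-> exists uv, f = F d1 d2 Psi uv.
  move=> [S_im _] f; rewrite S_im.
  split=> [[be [ga [[lin_be le_be] [lin_ga le_ga] ->]]]|[[u v] ->]].
    exists ([ffun i : 'I_d1.+1 => be`_(q ^ i)], [ffun i : 'I_d2.+1 => ga`_(q ^ i)]).
    by rewrite /F /= -!linpolyE.
  by exists (linpoly u), (linpoly v).
move=> par par'; have /eqP := card_eq_of_image (F_inj _ _ _ par) (F_inj _ _ _ par')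
  (fun f => iff_trans (iff_sym (F_im _ _ _ par f)) (F_im _ _ _ par' f)).
by rewrite !card_prod !card_ffun !card_ord -!expnD eqn_exp2l ?finNzRing_gt1 // => /eqP; lia.
Qed.

End Counting.

(* For linearized f, [wbounded q (k - 1) N f] says that the (0,k-1)-weighted q-degree of
   f is at most N. *)
Definition wbounded (L : fieldType) (q c N : nat) (f : lpair L) : bool :=
  (deg f.1 <= q ^ N)%N && (deg f.2 * q ^ c <= q ^ N)%N.

Lemma deg_comb_max (L : fieldType) (b1 b2 : lpair L) w beta gamma :
  (deg b1.2 * w < deg b1.1)%N -> (deg b2.1 <= deg b2.2 * w)%N ->
  let f := padd (Defs.pcomp beta b1) (Defs.pcomp gamma b2) in
  maxn (deg f.1) (deg f.2 * w) = maxn (deg beta * deg b1.1) (deg gamma * (deg b2.2 * w)).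
Proof.
move=> lt_b1 le_b2 /=; rewrite -!deg_comp.
set X := deg (beta \Po b1.1); set Y := (deg gamma * (deg b2.2 * w))%N.
have le_gb2 : (deg (gamma \Po b2.1) <= Y)%N by rewrite deg_comp leq_mul2l le_b2 orbT.
have le_bb1 : (deg (beta \Po b1.2) * w <= X)%N.
  by rewrite /X !deg_comp -mulnA leq_mul2l ltnW ?orbT.
have le_f1 : (deg ((beta \Po b1.1) + (gamma \Po b2.1)) <= maxn X Y)%N.
  by apply: leq_trans (deg_add_leq _ _) _; rewrite geq_max leq_maxl (leq_trans le_gb2) ?leq_maxr.
have le_f2 : (deg ((beta \Po b1.2) + (gamma \Po b2.2)) * w <= maxn X Y)%N.
  apply: leq_trans (leq_mul (deg_add_leq _ _) (leqnn w)) _.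
  by rewrite maxnMl geq_max (leq_trans le_bb1) ?leq_maxl // deg_comp -mulnA leq_maxr.
apply/eqP; rewrite eqn_leq geq_max le_f1 le_f2 /=.
have [lt_YX|le_XY] := ltnP Y X.
  by rewrite degDl ?leq_maxl // (leq_ltn_trans le_gb2).
have [->|Y_gt0] := posnP Y; first by [].
have w_gt0 : (0 < w)%N by move: Y_gt0; rewrite /Y !muln_gt0 => /and3P[].
have lt_bb1 : (deg (beta \Po b1.2) * w < Y)%N.
  rewrite deg_comp; have [->|beta_gt0] := posnP (deg beta); first by rewrite !mul0n.
  by apply: leq_trans le_XY; rewrite /X deg_comp -mulnA ltn_pmul2l.
have -> : deg ((beta \Po b1.2) + (gamma \Po b2.2)) = deg (gamma \Po b2.2).
  by rewrite addrC degDl // -(ltn_pmul2r w_gt0) [deg (gamma \Po _)]deg_comp -mulnA.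
by rewrite [deg (gamma \Po _)]deg_comp -mulnA leq_maxr.
Qed.

Section TwoParametrizations.

Variables (L : finFieldType) (q c N : nat).
Hypotheses (q_gt1 : (1 < q)%N) (q_char : [pchar L].-nat q).
Implicit Types (M : lpair L -> Prop) (beta gamma : {poly L}).

Let leq_mul_expn x a : (a <= N)%N -> (x * q ^ a <= q ^ N)%N = (x <= q ^ (N - a))%N.
Proof.
move=> le_aN; have qa_gt0 : (0 < q ^ a)%N by rewrite expn_gt0 ltnW.
by rewrite -[RHS](leq_pmul2r qa_gt0) -expnD subnK.
Qed.

Lemma basis_parametrizes M (b1 b2 : lpair L) a d :
  is_basis2 q M b1 b2 -> deg b1.1 = (q ^ a)%N -> deg b2.2 = (q ^ d)%N ->
  (deg b1.2 * q ^ c < q ^ a)%N -> (deg b2.1 <= q ^ d * q ^ c)%N ->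
  (a <= N)%N -> (d + c <= N)%N ->
  parametrizes q (fun beta gamma => padd (Defs.pcomp beta b1) (Defs.pcomp gamma b2))
    (fun f => M f /\ wbounded q c N f) (N - a) (N - (d + c)).
Proof.
move=> [_ _ M_span M_free] deg_b11 deg_b22 lt_b1 le_b2 le_aN le_dcN.
set comb := fun beta gamma => _.
have wbounded_comb beta gamma : wbounded q c N (comb beta gamma) =
    (deg beta <= q ^ (N - a))%N && (deg gamma <= q ^ (N - (d + c)))%N.
  rewrite /wbounded -geq_max deg_comb_max ?deg_b22 //; last by rewrite deg_b11.
  by rewrite geq_max deg_b11 -expnD !leq_mul_expn.
split=> [f|beta gamma beta' gamma' [lin_b _] [lin_g _] [lin_b' _] [lin_g' _] eq_comb].
  split=> [[/M_span [beta [gamma [lin_b lin_g ->]]]]|[beta [gamma [[lin_b le_b] [lin_g le_g] ->]]]].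
    by rewrite wbounded_comb => /andP[le_b le_g]; exists beta, gamma.
  by rewrite wbounded_comb le_b le_g; split=> //; apply/M_span; exists beta, gamma.
have [] := M_free (beta - beta') (gamma - gamma')
  (linearizedB lin_b lin_b') (linearizedB lin_g lin_g').
  move: eq_comb; rewrite /comb /padd /Defs.pcomp /pzero /= !comp_polyB => -[eq1 eq2].
  by congr pair; rewrite addrACA -opprD ?eq1 ?eq2 subrr.
by move=> /eqP; rewrite subr_eq0 => /eqP-> /eqP; rewrite subr_eq0 => /eqP->.
Qed.

Lemma comb_generators (Pi Lam beta gamma : {poly L}) :
  linearized q beta -> linearized q gamma ->
  padd (Defs.pcomp beta (Pi, 0)) (Defs.pcomp gamma (- Lam, 'X)) =
  ((beta \Po Pi) - (gamma \Po Lam), gamma).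
Proof.
move=> lin_b lin_g; rewrite /padd /Defs.pcomp /= (comp_linearizedN q_gt1 q_char _ lin_g).
by rewrite comp_polyXr comp_poly0r (linearized_coef0 q_gt1 lin_b) add0r.
Qed.

Lemma leq_deg_comp_sub (Pi delta r : {poly L}) n :
  deg Pi = (q ^ n)%N -> (n <= N)%N -> (deg r < q ^ n)%N ->
  (deg ((delta \Po Pi) - r) <= q ^ N)%N = (deg delta <= q ^ (N - n))%N.
Proof.
move=> deg_Pi le_nN lt_r; have [delta0|delta_gt0] := posnP (deg delta).
  rewrite delta0 leq0n (leq_trans (deg_add_leq _ _)) // geq_max deg_comp delta0 degN /=.
  by rewrite ltnW // (leq_trans lt_r) // leq_exp2l.
rewrite degDl deg_comp deg_Pi ?leq_mul_expn // degN (leq_trans lt_r) //.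
by rewrite leq_pmull.
Qed.

Lemma generators_parametrize M (Pi Lam : {poly L}) n :
  linearized q Pi -> Pi \is monic -> deg Pi = (q ^ n)%N -> linearized q Lam ->
  (forall f, M f <-> exists beta gamma, [/\ linearized q beta, linearized q gamma
     & f = padd (Defs.pcomp beta (Pi, 0)) (Defs.pcomp gamma (- Lam, 'X))]) ->
  (n <= N)%N -> (c <= N)%N ->
  exists Phi, parametrizes q Phi (fun f => M f /\ wbounded q c N f) (N - n) (N - c).
Proof.
move=> lin_Pi mon_Pi deg_Pi lin_Lam M_gen le_nN le_cN.
have qn_gt0 : (0 < q ^ n)%N by rewrite expn_gt0 ltnW.
(* [red v] reduces [linpoly q v \Po Lam] modulo [Pi]; choosing it on the finite type of
   coefficient vectors makes it a function. *)
have red_ex (v : {ffun 'I_(N - c).+1 -> L}) : exists beta,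
    linearized q beta /\ (deg ((linpoly q v \Po Lam) - (beta \Po Pi)) < q ^ n)%N.
  have [beta lin_b lt_b] := linearized_divp q_gt1 q_char lin_Pi mon_Pi deg_Pi
    (linearized_comp q_gt1 q_char (@linearized_linpoly _ q _ v) lin_Lam).
  by exists beta.
have [red red_spec] := fin_all_exists red_ex.
pose vec gamma := [ffun i : 'I_(N - c).+1 => gamma`_(q ^ i)].
pose rho gamma := (gamma \Po Lam) - (red (vec gamma) \Po Pi).
have rho_spec gamma : bounded_linearized q (N - c) gamma ->
    linearized q (red (vec gamma)) /\ (deg (rho gamma) < q ^ n)%N.
  by move=> [lin_g le_g]; rewrite /rho [X in X \Po Lam](linpolyE q_gt1 lin_g le_g).
exists (fun delta gamma => ((delta \Po Pi) - rho gamma, gamma)).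
split=> [f|delta gamma delta' gamma' [lin_d _] _ [lin_d' _] _ [eq1 eq_g]]; last first.
  subst gamma'; split=> //; have /eqP := addIr _ eq1; rewrite -subr_eq0 -comp_polyB => /eqP comp0.
  have : (deg (delta - delta') * q ^ n == 0)%N by rewrite -deg_Pi -deg_comp comp0 deg0.
  rewrite muln_eq0 (gtn_eqF qn_gt0) orbF (deg_linearized_eq0 q_gt1 (linearizedB lin_d lin_d')).
  by rewrite subr_eq0 => /eqP.
split=> [[/M_gen [beta [gamma [lin_b lin_g ->]]]]|].
  rewrite comb_generators // /wbounded /= leq_mul_expn // => /andP[le_f1 le_g].
  have [lin_red lt_rho] := rho_spec gamma (conj lin_g le_g).
  exists (beta - red (vec gamma)), gamma; split=> //.
    split; first exact: linearizedB.
    by rewrite -(leq_deg_comp_sub _ deg_Pi le_nN lt_rho) /rho comp_polyB opprB addrA subrK.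
  by rewrite /rho comp_polyB opprB addrA subrK.
move=> [delta [gamma [[lin_d le_d] [lin_g le_g] ->]]].
have [lin_red lt_rho] := rho_spec gamma (conj lin_g le_g).
split; last by rewrite /wbounded /= (leq_deg_comp_sub _ deg_Pi le_nN lt_rho) leq_mul_expn // le_d.
have lin_dr : linearized q (delta + red (vec gamma)) by apply: linearizedD.
apply/M_gen; exists (delta + red (vec gamma)), gamma; split=> //.
by rewrite comb_generators // /rho comp_polyD opprB addrA.
Qed.

End TwoParametrizations.

Lemma basis2_neq0 (L : fieldType) q (M : lpair L -> Prop) (b1 b2 : lpair L) :
  is_basis2 q M b1 b2 -> b1 <> pzero L.
Proof.
move=> [_ _ _ B_free] b1_0; have [|/eqP] := B_free 'X 0 (@linearizedX L q) (@linearized0 L q).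
  by rewrite /padd /Defs.pcomp b1_0 /= !comp_polyX !comp_poly0 !addr0.
by rewrite polyX_eq0.
Qed.

Lemma prime_power_char (L : finFieldType) q m :
  (exists p e : nat, [/\ prime p, (0 < e)%N & q = (p ^ e)%N]) -> #|L| = (q ^ m)%N ->
  (1 < q)%N /\ [pchar L].-nat q.
Proof.
move=> [p [e [p_pr e_gt0 ->]]] L_card; split.
  by rewrite (leq_trans (prime_gt1 p_pr)) // -{1}(expn1 p) leq_pexp2l // prime_gt0.
have p_char : p \in [pchar L] by apply: (@card_finPcharP _ _ (e * m)); rewrite ?L_card ?expnM.
by rewrite pnatX (eq_pnat _ (pcharf_eq p_char)) pnat_id.
Qed.

Section InterpolationModule.

Variables (L : finFieldType) (q m n : nat) (g r : n.-tuple L).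
Hypotheses (q_gt1 : (1 < q)%N) (q_char : [pchar L].-nat q) (L_card : #|L| = (q ^ m)%N).
Hypothesis g_indep : Fq_lin_indep q g.

Lemma Pi_g_linearized_monic :
  [/\ linearized q (Pi_g q g), Pi_g q g \is monic & deg (Pi_g q g) = (q ^ n)%N].
Proof.
rewrite (Pi_g_subspace_poly q_gt1 q_char L_card g_indep).
have [mon_S size_S] := @subspace_poly_monic_size L q q_gt1 g.
by rewrite /deg size_S size_tuple; split=> //; apply: linearized_subspace_poly.
Qed.

Lemma Mmod_linearized f : Mmod q g r f -> linearized q f.1 /\ linearized q f.2.
Proof.
have [lin_Pi _ _] := Pi_g_linearized_monic.
move=> [beta [gamma [lin_b lin_g ->]]]; split; apply: linearizedD;
  apply: linearized_comp => //=;
  [exact/linearizedN/linearized_Lambda | exact: linearized0 | exact: linearizedX].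
Qed.

End InterpolationModule.

Unset Implicit Arguments.

Theorem lemma31 (q m n k : nat) (L : finFieldType) (g r : n.-tuple L)
    (b1 b2 : lpair L) :
  (exists p e : nat, [/\ prime p, (0 < e)%N & q = (p ^ e)%N]) ->
  (1 <= m)%N -> #|L| = (q ^ m)%N ->
  (1 <= k)%N -> (k <= n)%N ->
  Fq_lin_indep q g ->
  is_minimal_basis2 q k (Mmod q g r) b1 b2 ->
  lpos q k b1 = 1%N -> lpos q k b2 = 2%N ->
  (wqdeg q k b1 + wqdeg q k b2)%N = (n + k - 1)%N /\
  (qdeg q b1.1 + qdeg q b2.2)%N = n.
Proof.
move=> q_pp _ L_card k_gt0 _ g_indep [B_basis _ _] lpos_b1 lpos_b2.
have [q_gt1 q_char] := prime_power_char q_pp L_card.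
have [lin_Pi mon_Pi deg_Pi] := Pi_g_linearized_monic q_gt1 q_char L_card g_indep.
have [M_b1 M_b2 _ _] := B_basis.
have [lin11 lin12] := Mmod_linearized q_gt1 q_char L_card g_indep M_b1.
have [lin21 lin22] := Mmod_linearized q_gt1 q_char L_card g_indep M_b2.
have [deg_b11 lt_b12 wqdeg_b1] := lpos1_deg q_gt1 lin11 lin12 (basis2_neq0 B_basis) lpos_b1.
have [deg_b22 le_b21 wqdeg_b2] := lpos2_deg q_gt1 lin21 lin22 lpos_b2.
set a := qdeg q b1.1 in deg_b11 wqdeg_b1 *; set d := qdeg q b2.2 in deg_b22 wqdeg_b2 *.
pose N := (n + a + d + k)%N.
have [le_aN le_dcN le_nN le_cN] : [/\ a <= N, d + (k - 1) <= N, n <= N & k - 1 <= N]%N.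
  by rewrite /N; split; lia.
have [Phi gen_par] := generators_parametrize (c := (k - 1)%N) (N := N) (M := Mmod q g r)
  q_gt1 q_char lin_Pi mon_Pi deg_Pi
  (@linearized_Lambda L q n g r) (fun f => iff_refl _) le_nN le_cN.
have basis_par := basis_parametrizes (c := (k - 1)%N) (N := N) q_gt1 B_basis
  deg_b11 deg_b22 _ _ le_aN le_dcN.
have := parametrizes_dim q_gt1 (basis_par _ _) gen_par.
  by rewrite wqdeg_b1 wqdeg_b2 /N; lia.
all: by rewrite -?deg_b11 -?deg_b22.
Qed.
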